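(* Let $\mathcal I$ be a finite set of followers, $\pi$ a fixed leader strategy, and for each $i\in\mathcal I$ let $\mathcal X_i=\{x^i\in\mathbb{R}^{m_F}\mid A_ix^i=b_i,\ G_ix^i\le h_i\}$ be nonempty, compact and satisfying Slater's condition. Let $J^i(x^i,x^{-i},\pi)=\tfrac12 (x^i)^TPx^i+(x^i)^TQ\sigma(x^{-i})+r_i^Tx^i+(x^i)^TS_i\pi$ with $\sigma(x^{-i})=\sum_{j\ne i}x^j$, $P=P^T\succ0$, $Q=Q^T\succeq0$, $P\succ Q$, $S_i$ diagonal with $S_i\succeq0$, and let $x^*=(x^{i*},x^{-i*})$ be the unique Nash equilibrium of the followers' game (obtained by the Picard–Banach iteration $x_{k+1}=\Pi_{\mathcal X}[x_k-\gamma F(x_k,\pi)]$). Fix $i$; let $\overline G_i,\overline h_i$ be the rows of $G_i,h_i$ corresponding to constraints active at $x^{i*}$ and $\underline G_i,\underline h_i$ the remaining rows (so $\overline G_ix^{i*}=\overline h_i$, $\underline G_ix^{i*}<\underline h_i$), and set $\overline A_i=\begin{bmatrix}A_i\\ \overline G_i\end{bmatrix}$, $\overline b_i=\begin{bmatrix}b_i\\ \overline h_i\end{bmatrix}$. Consider the auxiliary best-response problem $$\min_{x^i\in\mathbb{R}^{m_F}}J^i(x^i,x^{-i*},\pi)\ \text{ s.t. } \overline A_ix^i=\overline b_i,\ \underline G_ix^i\le\underline h_i,$$ with KKT map, for $z_i=(x^i,\lambda_i,\nu_i)$, $$l_i(z_i,\pi\mid x^{-i*})=\begin{bmatrix}\nabla_{x^i}J^i(x^i,x^{-i*},\pi)+\underline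 G_i^T\lambda_i+\overline A_i^T\nu_i\\ \mathrm{Dg}(\lambda_i)(\underline G_ix^i-\underline h_i)\\ \overline A_ix^i-\overline b_i\end{bmatrix},$$ and let $\hat z_i=(x^{i*},\hat\lambda_i,\hat\nu_i)$ be its KKT point (primal-dual optimal solution). Assume $\overline A_i$ has full row rank. Then the set $\overline\Gamma_i=\{j\mid (\hat\lambda_i)_j=0\text{ and }(\underline G_ix^{i*}-\underline h_i)_j=0\}$ is empty, and the Jacobian $\mathbf D_{z_i}l_i(\hat z_i,\pi\mid x^{-i*})$ is invertible and equals $$\begin{bmatrix}\nabla_{x^ix^i}J^i & \underline G_i^T & \overline A_i^T\\ \mathbf 0 & \mathrm{Dg}(\underline G_ix^{i*}-\underline h_i) & \mathbf 0\\ \overline A_i & \mathbf 0 & \mathbf 0\end{bmatrix}.$$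
   Context: $\mathrm{Dg}(v)$ denotes the diagonal matrix with the vector $v$ on its diagonal; $\mathbf D_{z}f$ denotes the Jacobian of $f$ with respect to $z$. $F(x,\pi)=\mathrm{col}((\nabla_{x^i}J^i)_i)$ is the pseudo-gradient of the followers' game and $\Pi_{\mathcal X}$ the Euclidean projection onto $\mathcal X=\prod_i\mathcal X_i$. *)

From HB Require Import structures.
From mathcomp Require Import all_boot all_order all_algebra.
From mathcomp Require Import all_classical all_reals all_analysis.
Set Implicit Arguments. Unset Strict Implicit. Unset Printing Implicit Defensive.
Import Order.TTheory GRing.Theory Num.Theory.
Import numFieldNormedType.Exports.
Local Open Scope classical_set_scope.
Local Open Scope ring_scope.

Section GameDefs.
Variable R : realType.

Definition jac n k (f : 'cV[R]_n -> 'cV[R]_k) (z : 'cV[R]_n) : 'M[R]_(k, n) :=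
  \matrix_(r, c) derive1 (fun t : R => f (z + t *: delta_mx c 0) r 0) 0.

Definition gradient n (g : 'cV[R]_n -> R) (z : 'cV[R]_n) : 'cV[R]_n :=
  \col_c derive1 (fun t : R => g (z + t *: delta_mx c 0)) 0.

Definition Dg n (v : 'cV[R]_n) : 'M[R]_n := diag_mx v^T.

Definition posdef n (M : 'M[R]_n) : Prop :=
  forall v : 'cV[R]_n, v != 0 -> 0 < (v^T *m M *m v) 0 0.
Definition psd n (M : 'M[R]_n) : Prop :=
  forall v : 'cV[R]_n, 0 <= (v^T *m M *m v) 0 0.

Definition polyset m p q (A : 'M[R]_(p, m)) (b : 'cV[R]_p)
  (G : 'M[R]_(q, m)) (h : 'cV[R]_q) : set 'cV[R]_m :=
  [set x | A *m x = b /\ forall j, (G *m x) j 0 <= h j 0].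

Definition slater m p q (A : 'M[R]_(p, m)) (b : 'cV[R]_p)
  (G : 'M[R]_(q, m)) (h : 'cV[R]_q) : Prop :=
  exists x : 'cV[R]_m, A *m x = b /\ forall j, (G *m x) j 0 < h j 0.

Definition sigma_others N m (x : 'I_N -> 'cV[R]_m) (i : 'I_N) : 'cV[R]_m :=
  \sum_(j < N | j != i) x j.

(* J^i(y, x^{-i}, pi); the i-th entry of the profile x is ignored. *)
Definition Jcost N m (P Q : 'M[R]_m) (r : 'I_N -> 'cV[R]_m)
  (S : 'I_N -> 'M[R]_m) (pi : 'cV[R]_m) (i : 'I_N)
  (y : 'cV[R]_m) (x : 'I_N -> 'cV[R]_m) : R :=
  (y^T *m P *m y) 0 0 / 2 + (y^T *m Q *m sigma_others x i) 0 0
  + ((r i)^T *m y) 0 0 + (y^T *m S i *m pi) 0 0.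

Definition is_NE N m (X : 'I_N -> set 'cV[R]_m)
  (J : 'I_N -> 'cV[R]_m -> ('I_N -> 'cV[R]_m) -> R) (xs : 'I_N -> 'cV[R]_m) : Prop :=
  forall i, X i (xs i) /\ forall y, X i y -> J i (xs i) xs <= J i y xs.

Definition active_set m q (G : 'M[R]_(q, m)) (h : 'cV[R]_q) (x : 'cV[R]_m)
  : {set 'I_q} := [set j | (G *m x) j 0 == h j 0].

Section Split.
Variables (m p q : nat) (A : 'M[R]_(p, m)) (b : 'cV[R]_p)
  (G : 'M[R]_(q, m)) (h : 'cV[R]_q) (xs : 'cV[R]_m).

Local Notation act := (active_set G h xs).

Definition Gover : 'M[R]_(#|act|, m) := rowsub (fun k => @enum_val _ (mem act) k) G.
Definition hover : 'cV[R]_(#|act|) := rowsub (fun k => @enum_val _ (mem act) k) h.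
Definition Gunder : 'M[R]_(#|~: act|, m) :=
  rowsub (fun k => @enum_val _ (mem (~: act)) k) G.
Definition hunder : 'cV[R]_(#|~: act|) :=
  rowsub (fun k => @enum_val _ (mem (~: act)) k) h.
Definition Abar : 'M[R]_(p + #|act|, m) := col_mx A Gover.
Definition bbar : 'cV[R]_(p + #|act|) := col_mx b hover.

(* KKT map l_i(z | x^{-i*}); gJ is the map x^i |-> grad_{x^i} J^i(x^i,x^{-i*},pi);
   z = (x^i, lambda_i, nu_i). *)
Definition kkt_map (gJ : 'cV[R]_m -> 'cV[R]_m)
  (z : 'cV[R]_(m + #|~: act| + (p + #|act|))) : 'cV[R]_(m + #|~: act| + (p + #|act|)) :=
  let x := usubmx (usubmx z) in
  let lam := dsubmx (usubmx z) in
  let nu := dsubmx z in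
  col_mx (col_mx (gJ x + Gunder^T *m lam + Abar^T *m nu)
                 (Dg lam *m (Gunder *m x - hunder)))
         (Abar *m x - bbar).

Definition Gamma_bar (lam : 'cV[R]_(#|~: act|)) : {set 'I_(#|~: act|)} :=
  [set j | (lam j 0 == 0) && ((Gunder *m xs - hunder) j 0 == 0)].
End Split.

End GameDefs.

Arguments Gover {R m q} G h xs.
Arguments hover {R m q} G h xs.
Arguments Gunder {R m q} G h xs.
Arguments hunder {R m q} G h xs.
Arguments Abar {R m p q} A G h xs.
Arguments bbar {R m p q} b G h xs.
Arguments kkt_map {R m p q} A b G h xs gJ z.
Arguments Gamma_bar {R m q} G h xs lam.

From HB Require Import structures.
From mathcomp Require Import all_boot all_order all_algebra.
From mathcomp Require Import all_classical all_reals all_analysis.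
From mathcomp Require Import ring zify.
Set Implicit Arguments. Unset Strict Implicit. Unset Printing Implicit Defensive.
Import Order.TTheory GRing.Theory Num.Theory.
Import numFieldNormedType.Exports.
Local Open Scope classical_set_scope.
Local Open Scope ring_scope.

(* Feasibility of x^{i*} makes every inactive constraint strictly slack, so
   complementary slackness Dg(lambda)(G x - h) = 0 forces lambda = 0; hence
   Gamma_bar is empty.  At lambda = 0 the bilinear block Dg(lambda)(G x - h) is
   linear along every coordinate direction, because such a direction moves
   either x or lambda but not both; so the KKT map is affine along coordinate
   lines and its Jacobian is the block matrix with Hessian P.  That matrix is
   injective: the nonzero diagonal Dg(G x - h) kills lambda, then
   x^T P x = -(Abar x)^T nu = 0 and P > 0 kill x, and full row rank of Abar kills nu. *)

Lemma trmx11 (T : Type) (M : 'M[T]_1) : M^T = M.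
Proof. by apply/matrixP=> a b; rewrite (ord1 a) (ord1 b) mxE. Qed.

Lemma dotmxC (R : comPzRingType) m (u v : 'cV[R]_m) : u^T *m v = v^T *m u.
Proof. by rewrite -[LHS]trmx11 trmx_mul trmxK. Qed.

Lemma bilinear_formC (R : comPzRingType) m (u v : 'cV[R]_m) (M : 'M[R]_m) :
  u^T *m M *m v = v^T *m M^T *m u.
Proof. by rewrite -[LHS]trmx11 !trmx_mul trmxK mulmxA. Qed.

Lemma Dg_mulC (R : realType) n (u v : 'cV[R]_n) : Dg u *m v = Dg v *m u.
Proof. by apply/matrixP=> j k; rewrite /Dg !mul_diag_mx !mxE (ord1 k) mulrC. Qed.

Lemma DgZ (R : realType) n (a : R) (u : 'cV[R]_n) : Dg (a *: u) = a *: Dg u.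
Proof. by rewrite /Dg linearZ /= linearZ. Qed.

Lemma Dg0 (R : realType) n : Dg (0 : 'cV[R]_n) = 0.
Proof. by rewrite /Dg trmx0 linear0. Qed.

Lemma Dg_mul_eq0 (R : realType) n (l s : 'cV[R]_n) :
  (forall j, s j 0 != 0) -> Dg l *m s = 0 -> l = 0.
Proof.
move=> s_neq0 /matrixP ls0; apply/matrixP=> j k; rewrite (ord1 k).
have /eqP := ls0 j 0; rewrite /Dg mul_diag_mx !mxE mulf_eq0.
by rewrite (negbTE (s_neq0 j)) orbF => /eqP.
Qed.

Section Derivatives.
Variable R : realType.

Lemma derive1_quadratic (a b c : R) :
  derive1 (fun t : R => a + t * b + t ^+ 2 * c) 0 = b.
Proof.
rewrite derive1E; apply: derive_val; apply: is_derive_eq.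
rewrite !(scaler0, mul0r, add0r, scale0r, expr0n, addr0) /=.
by rewrite mul1r /GRing.scale /= mulr1.
Qed.

Lemma derive1_affine (a b : R) : derive1 (fun t : R => a + t * b) 0 = b.
Proof.
have := derive1_quadratic a b 0.
by under eq_fun do rewrite mulr0 addr0.
Qed.

Lemma jac_coord_affine n k (f : 'cV[R]_n -> 'cV[R]_k) z (M : 'M[R]_(k, n)) :
  (forall c (t : R), f (z + t *: delta_mx c 0) = f z + t *: (M *m delta_mx c 0)) ->
  jac f z = M.
Proof.
move=> f_aff; apply/matrixP=> r c; rewrite mxE.
under eq_fun do rewrite f_aff -colE !mxE.
exact: derive1_affine.
Qed.

Lemma gradient_second_order n (g : 'cV[R]_n -> R) y (d : 'cV[R]_n)
    (c : 'cV[R]_n -> R) :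
  (forall e (t : R), g (y + t *: e) = g y + t * (e^T *m d) 0 0 + t ^+ 2 * c e) ->
  gradient g y = d.
Proof.
move=> g_exp; apply/matrixP=> k l; rewrite (ord1 l) mxE.
under eq_fun do rewrite g_exp.
by rewrite derive1_quadratic trmx_delta -rowE mxE.
Qed.

End Derivatives.

Section FollowerCost.
Variables (R : realType) (N m : nat) (P Q : 'M[R]_m) (r : 'I_N -> 'cV[R]_m)
  (S : 'I_N -> 'M[R]_m) (pi : 'cV[R]_m) (i : 'I_N) (xs : 'I_N -> 'cV[R]_m).
Hypothesis P_sym : P^T = P.

Local Notation J y := (Jcost P Q r S pi i y xs).
Local Notation gradJ y := (gradient (fun w => Jcost P Q r S pi i w xs) y).

Lemma Jcost_shift y e (t : R) :
  J (y + t *: e) = J y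
   + t * (e^T *m (P *m y + (Q *m sigma_others xs i + r i + S i *m pi))) 0 0
   + t ^+ 2 * ((e^T *m P *m e) 0 0 / 2).
Proof.
rewrite /Jcost; have -> : (y + t *: e)^T = y^T + t *: e^T by rewrite linearD linearZ.
rewrite !mulmxDl !mulmxDr -!scalemxAl -!scalemxAr.
rewrite !mulmxA (bilinear_formC y e P) P_sym (dotmxC (r i) e) !mxE.
set s := sigma_others xs i.
move: ((y^T *m P *m y) 0 0) ((e^T *m P *m y) 0 0) ((e^T *m P *m e) 0 0)
  ((y^T *m Q *m s) 0 0) ((e^T *m Q *m s) 0 0) (((r i)^T *m y) 0 0)
  ((e^T *m r i) 0 0) ((y^T *m S i *m pi) 0 0) ((e^T *m S i *m pi) 0 0) => *.
by field.
Qed.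

Lemma gradient_Jcost y :
  gradJ y = P *m y + (Q *m sigma_others xs i + r i + S i *m pi).
Proof. exact/gradient_second_order/Jcost_shift. Qed.

Lemma gradient_Jcost_shift y e (t : R) :
  gradJ (y + t *: e) = gradJ y + t *: (P *m e).
Proof. by rewrite !gradient_Jcost mulmxDr -scalemxAr addrAC. Qed.

Lemma jac_gradient_Jcost y : jac (fun y => gradJ y) y = P.
Proof. by apply: jac_coord_affine => c t; rewrite gradient_Jcost_shift. Qed.

End FollowerCost.

Definition kkt_matrix (R : realType) m k n (H : 'M[R]_m) (Gu : 'M[R]_(k, m))
    (s : 'cV[R]_k) (Ab : 'M[R]_(n, m)) : 'M[R]_(m + k + n) :=
  block_mx (block_mx H Gu^T 0 (Dg s)) (col_mx Ab^T 0) (row_mx Ab 0) 0.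

Lemma kkt_matrix_unitmx (R : realType) m k n (H : 'M[R]_m) (Gu : 'M[R]_(k, m))
    (s : 'cV[R]_k) (Ab : 'M[R]_(n, m)) :
  posdef H -> (forall j, s j 0 != 0) -> row_free Ab ->
  kkt_matrix H Gu s Ab \in unitmx.
Proof.
move=> H_pd s_neq0 Ab_free; rewrite -unitmx_tr -row_free_unit.
suff ker0 : forall w : 'cV[R]_(m + k + n), kkt_matrix H Gu s Ab *m w = 0 -> w = 0.
  apply: inj_row_free => v /(congr1 trmx); rewrite trmx_mul trmxK trmx0.
  by move=> /ker0 /(congr1 trmx); rewrite trmxK trmx0.
move=> w; rewrite -[w]vsubmxK -[usubmx w]vsubmxK.
move: (usubmx (usubmx w)) (dsubmx (usubmx w)) (dsubmx w) => x l nu /eqP.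
rewrite /kkt_matrix !mul_block_col mul_col_mx mul_row_col !mul0mx !add0r !addr0.
rewrite add_col_mx addr0 !col_mx_eq0 => /andP[/andP[/eqP eq_x /eqP eq_l] /eqP eq_nu].
have l0 : l = 0 by apply: Dg_mul_eq0 s_neq0 _; rewrite Dg_mulC.
rewrite l0 mulmx0 addr0 in eq_x.
have Hx : H *m x = - (Ab^T *m nu) by apply/eqP; rewrite -addr_eq0 eq_x.
have x0 : x = 0.
  have [//|/H_pd] := eqVneq x 0.
  by rewrite -mulmxA Hx mulmxN mulmxA -trmx_mul eq_nu trmx0 mul0mx oppr0 mxE ltxx.
rewrite x0 mulmx0 add0r in eq_x.
have nu0 : nu = 0.
  apply: trmx_inj; apply/eqP; rewrite trmx0 -(mulmx_free_eq0 _ Ab_free).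
  by rewrite -[Ab]trmxK -trmx_mul eq_x trmx0.
by rewrite x0 l0 nu0 !col_mx0.
Qed.

Lemma delta_mx_col3 (R : realType) a k n (c : 'I_(a + k + n)) :
  let e : 'cV[R]_(a + k + n) := delta_mx c 0 in
  usubmx (usubmx e) = 0 \/ dsubmx (usubmx e) = 0.
Proof.
have [c_lt|c_ge] := ltnP c a; [right | left]; apply/matrixP=> j l; rewrite !mxE.
  by case: eqP => // c_eq; move: c_lt; rewrite -c_eq /=; lia.
by case: eqP => // c_eq; move: c_ge (ltn_ord j); rewrite -c_eq /=; lia.
Qed.

Section KKTMap.
Variables (R : realType) (m p q : nat) (A : 'M[R]_(p, m)) (b : 'cV[R]_p)
  (G : 'M[R]_(q, m)) (h : 'cV[R]_q) (xs : 'cV[R]_m).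

Local Notation Gu := (Gunder G h xs).
Local Notation hu := (hunder G h xs).
Local Notation Ab := (Abar A G h xs).

Lemma Gunder_slack_lt0 :
  (forall j, (G *m xs) j 0 <= h j 0) -> forall j, (Gu *m xs - hu) j 0 < 0.
Proof.
move=> feas j; rewrite mul_rowsub_mx mxE [X in _ + X]mxE [X in _ - X]mxE.
rewrite ![rowsub _ _ _ _]mxE subr_lt0 lt_neqAle feas andbT.
by have := enum_valP j; rewrite finset.in_setC inE.
Qed.

Lemma Gamma_bar_eq0 lam :
  (forall j, (Gu *m xs - hu) j 0 < 0) -> Gamma_bar G h xs lam = finset.set0.
Proof. by move=> slack; apply/setP=> j; rewrite !inE (lt_eqF (slack j)) andbF. Qed.

Variables (gJ : 'cV[R]_m -> 'cV[R]_m) (H : 'M[R]_m).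

Lemma kkt_map_compl x lam nu :
  kkt_map A b G h xs gJ (col_mx (col_mx x lam) nu) = 0 ->
  Dg lam *m (Gu *m x - hu) = 0.
Proof.
move/eqP; rewrite /kkt_map !col_mxKu !col_mxKd !col_mx_eq0.
by case/andP=> /andP[_ /eqP].
Qed.

Hypothesis gJ_shift : forall y e (t : R), gJ (y + t *: e) = gJ y + t *: (H *m e).

Lemma kkt_map_shift x nu ex el en (t : R) :
  ex = 0 \/ el = 0 ->
  let z := col_mx (col_mx x 0) nu in
  let e := col_mx (col_mx ex el) en in
  kkt_map A b G h xs gJ (z + t *: e) =
  kkt_map A b G h xs gJ z + t *: (kkt_matrix H Gu (Gu *m x - hu) Ab *m e).
Proof.
move=> ex_el_0 z e; rewrite /z /e /kkt_matrix !mul_block_col !mul_col_mx.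
rewrite !mul_row_col !mul0mx ?add0r ?addr0 !(scale_col_mx, add_col_mx).
rewrite /kkt_map !col_mxKu !col_mxKd.
congr (col_mx (col_mx _ _) _).
- rewrite gJ_shift !mulmxDr -!scalemxAr !scalerDr mulmx0 addr0.
  move: (gJ x) (H *m ex) (Gu^T *m el) (Ab^T *m nu) (Ab^T *m en) => ? ? ? ? ?.
  by apply/matrixP=> u v; rewrite !mxE; ring.
- rewrite Dg0 mul0mx !add0r addr0 DgZ -scalemxAl.
  case: ex_el_0 => ->; last by rewrite Dg0 mul0mx mulmx0.
  by rewrite scaler0 addr0 Dg_mulC.
- by rewrite mulmxDr -scalemxAr addrAC.
Qed.

Lemma jac_kkt_map x nu :
  jac (kkt_map A b G h xs gJ) (col_mx (col_mx x 0) nu) =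
  kkt_matrix H Gu (Gu *m x - hu) Ab.
Proof.
apply: jac_coord_affine => c t.
rewrite -[delta_mx c 0]vsubmxK -[usubmx (delta_mx c 0)]vsubmxK.
exact/kkt_map_shift/delta_mx_col3.
Qed.

End KKTMap.
Theorem theorem2 (R : realType) (N m : nat) (p q : 'I_N -> nat)
  (A : forall j, 'M[R]_(p j, m)) (b : forall j, 'cV[R]_(p j))
  (G : forall j, 'M[R]_(q j, m)) (h : forall j, 'cV[R]_(q j))
  (P Q : 'M[R]_m) (r : 'I_N -> 'cV[R]_m) (S : 'I_N -> 'M[R]_m)
  (pi : 'cV[R]_m) (xs : 'I_N -> 'cV[R]_m) (i : 'I_N)
  (lamh : 'cV[R]_(#|~: active_set (G i) (h i) (xs i)|))
  (nuh : 'cV[R]_(p i + #|active_set (G i) (h i) (xs i)|)) :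
  (forall j, polyset (A j) (b j) (G j) (h j) !=set0) ->
  (forall j, compact (polyset (A j) (b j) (G j) (h j))) ->
  (forall j, slater (A j) (b j) (G j) (h j)) ->
  P^T = P -> posdef P ->
  Q^T = Q -> psd Q ->
  posdef (P - Q) ->
  (forall j, is_diag_mx (S j) /\ psd (S j)) ->
  is_NE (fun j => polyset (A j) (b j) (G j) (h j)) (Jcost P Q r S pi) xs ->
  (forall ys, is_NE (fun j => polyset (A j) (b j) (G j) (h j))
                    (Jcost P Q r S pi) ys -> ys = xs) ->
  (forall k, 0 <= lamh k 0) ->
  kkt_map (A i) (b i) (G i) (h i) (xs i)
    (fun y => gradient (fun w => Jcost P Q r S pi i w xs) y)
    (col_mx (col_mx (xs i) lamh) nuh) = 0 ->
  row_free (Abar (A i) (G i) (h i) (xs i)) ->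
  Gamma_bar (G i) (h i) (xs i) lamh = finset.set0 /\
  let Jac := jac (kkt_map (A i) (b i) (G i) (h i) (xs i)
               (fun y => gradient (fun w => Jcost P Q r S pi i w xs) y))
               (col_mx (col_mx (xs i) lamh) nuh) in
  Jac \in unitmx /\
  Jac = block_mx
     (block_mx (jac (fun y => gradient (fun w => Jcost P Q r S pi i w xs) y) (xs i))
               (Gunder (G i) (h i) (xs i))^T
               0
               (Dg (Gunder (G i) (h i) (xs i) *m xs i - hunder (G i) (h i) (xs i))))
     (col_mx (Abar (A i) (G i) (h i) (xs i))^T 0)
     (row_mx (Abar (A i) (G i) (h i) (xs i)) 0)
     0.

Proof.
move=> _ _ _ P_sym P_pd _ _ _ _ NE _ _ kkt Ab_free.
have [[_ xs_feas] _] := NE i.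
have slack := Gunder_slack_lt0 xs_feas.
have slack_neq0 j := ltr0_neq0 (slack j).
have lam0 : lamh = 0 := Dg_mul_eq0 slack_neq0 (kkt_map_compl kkt).
split; first exact: Gamma_bar_eq0.
have gradJ_shift := gradient_Jcost_shift Q r S pi i xs P_sym.
rewrite lam0 jac_gradient_Jcost // (jac_kkt_map _ _ gradJ_shift).
by split=> //; apply: kkt_matrix_unitmx.
Qed.
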